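(* Let $\phi$ be a scoring rule, $C=(C_1,\dots,C_K)$ with $C_k:=\mathbb{E}[Q_k\mid S_k]$, $\mathrm{GL}(S):=\mathbb{E}[d_\phi(C,Q)]$, and let $h_1,\dots,h_K:[0,1]\to\mathbb{R}$ be functions such that $\mathrm{GL}(S)=\sum_{k=1}^K\mathbb{E}[\mathrm{Var}_{h_k}(Q_k\mid S_k)]$. For each $k$ let $\mathscr{R}_k:\mathcal{X}\to\mathbb{N}$ be a partition of the feature space (write $\mathscr{R}_k$ for $\mathscr{R}_k(X)$) and let $S_{B_k}$ be a binned version of $S_k$. Define, with $T_k\in\{S_k,S_{B_k}\}$ (and writing $S$ resp. $S_B$ for the two choices), $\mathrm{GL}_{\mathrm{explained}}(\cdot):=\sum_k\mathbb{E}[\mathrm{Var}_{h_k}(\mathbb{E}[Q_k\mid T_k,\mathscr{R}_k]\mid T_k)]$, $\mathrm{GL}_{\mathrm{residual}}(\cdot):=\sum_k\mathbb{E}[\mathrm{Var}_{h_k}(Q_k\mid T_k,\mathscr{R}_k)]$, and also $\mathrm{GL}(S_B):=\sum_k\mathbb{E}[\mathrm{Var}_{h_k}(Q_k\mid S_{B_k})]$, $\mathrm{GL}_{\mathrm{induced}}(S,S_B):=\sum_k\mathbb{E}[\mathrm{Var}_{h_k}(C_k\mid S_{B_k})]$. Then: (1) $\mathrm{GL}(S)=\mathrm{GL}_{\mathrm{explained}}(S)+\mathrm{GL}_{\mathrm{residual}}(S)$; (2) $\mathrm{GL}(S_B)=\mathrm{GL}(S)+\mathrm{GL}_{\mathrm{induced}}(S,S_B)$;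 (3) $\mathrm{GL}(S)=\mathrm{GL}_{\mathrm{explained}}(S_B)-\mathrm{GL}_{\mathrm{induced}}(S,S_B)+\mathrm{GL}_{\mathrm{residual}}(S_B)$. Moreover, if every $h_k$ is convex, then $\mathrm{GL}(S)\ge\mathrm{GL}_{\mathrm{explained}}(S)\ge0$, $\mathrm{GL}_{\mathrm{induced}}(S,S_B)\ge0$, and $\mathrm{GL}(S)\ge\mathrm{GL}_{\mathrm{explained}}(S_B)-\mathrm{GL}_{\mathrm{induced}}(S,S_B)$.
   Context: Let $(X,Y)$ be jointly distributed with $X\in\mathcal{X}$ and $Y\in\{e_1,\dots,e_K\}$ (one-hot vectors of $\mathbb{R}^K$); $Q_k:=P(Y=e_k\mid X)$; $S=(S_1,\dots,S_K)=f(X)$ in the probability simplex for a classifier $f$. A scoring rule $\phi$ assigns a real number $\phi(p,e_k)$ to a score vector $p$ and label $e_k$; $s_\phi(P,q):=\sum_k\phi(P,e_k)q_k$, $d_\phi(P,q):=s_\phi(P,q)-s_\phi(q,q)$. For $f:\mathbb{R}\to\mathbb{R}$ and random variables $U,V$, $\mathrm{Var}_f(U\mid V):=\mathbb{E}[f(U)\mid V]-f(\mathbb{E}[U\mid V])$. A binned version of $S_k$: given a partition of $[0,1]$ into bins $\mathcal{B}_j$, $S_{B_k}$ equals $\mathbb{E}[S_k\mid S_k\in\mathcal{B}_j]$ on $\{S_k\in\mathcal{B}_j\}$. All required expectations are assumed to exist. *)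

From HB Require Import structures.
From mathcomp Require Import all_boot all_order all_algebra.
From mathcomp Require Import all_classical all_reals all_analysis.
Set Implicit Arguments. Unset Strict Implicit. Unset Printing Implicit Defensive.
Import Order.TTheory GRing.Theory Num.Theory.
Local Open Scope classical_set_scope.
Local Open Scope ring_scope.

Definition sigma_of {d} {T : measurableType d} {d'} {T' : measurableType d'}
  (V : T -> T') : set (set T) :=
  preimage_set_system setT V measurable.

Definition is_cond_exp {d} {T : measurableType d} {R : realType}
  (P : probability T R) (G : set (set T)) (U W : T -> R) : Prop :=
  [/\ (forall B : set R, measurable B -> G (W @^-1` B)),
      P.-integrable setT (EFin \o W)
    & forall A, G A ->
        (\int[P]_(x in A) (W x)%:E = \int[P]_(x in A) (U x)%:E)%E ].

(* Existence of conditional expectations of integrable variables w.r.t.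
   sub-sigma-algebras (a standard theorem, not provided by the library). *)
Definition cond_exp_exist {d} {T : measurableType d} {R : realType}
  (P : probability T R) : Prop :=
  forall (G : set (set T)) (U : T -> R),
    sigma_algebra setT G -> G `<=` measurable ->
    P.-integrable setT (EFin \o U) ->
    exists W, is_cond_exp P G U W.

Definition CE {d} {T : measurableType d} {R : realType}
  (P : probability T R) (G : set (set T)) (U : T -> R) : T -> R :=
  match pselect (exists W, is_cond_exp P G U W) with
  | left h => projT1 (cid h)
  | right _ => fun _ => 0
  end.

Definition cvar {d} {T : measurableType d} {R : realType}
  (P : probability T R) (h : R -> R) (G : set (set T)) (U : T -> R) : T -> R :=
  fun w => CE P G (h \o U) w - h (CE P G U w).

Definition Ecvar {d} {T : measurableType d} {R : realType}
  (P : probability T R) (h : R -> R) (G : set (set T)) (U : T -> R) : \bar R :=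
  'E_P[cvar P h G U].

(* Binned version of V w.r.t. the partition of [0,1] into the bins
   B_j = bin^{-1}(j): on {V in B_j}, it equals E[V | V in B_j]. *)
Definition binned {d} {T : measurableType d} {R : realType}
  (P : probability T R) (bin : R -> nat) (V : T -> R) : T -> R :=
  fun w =>
    let A := V @^-1` (bin @^-1` [set bin (V w)]) in
    fine (\int[P]_(x in A) (V x)%:E) / fine (P A).

Definition convex01 {R : realType} (h : R -> R) : Prop :=
  forall x y t : R, 0 <= x <= 1 -> 0 <= y <= 1 -> 0 <= t <= 1 ->
    h (t * x + (1 - t) * y) <= t * h x + (1 - t) * h y.

Definition hint {d} {T : measurableType d} {R : realType}
  (P : probability T R) (h : R -> R) (U : T -> R) : Prop :=
  P.-integrable setT (EFin \o (h \o U)).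

From HB Require Import structures.
From mathcomp Require Import all_boot all_order all_algebra.
From mathcomp Require Import all_classical all_reals all_analysis.
From mathcomp Require Import ring lra.
Import Order.TTheory GRing.Theory Num.Theory.
Local Open Scope classical_set_scope.
Local Open Scope ring_scope.

(* Each summand has the form E[Var_h(U | G)] = E[h(U)] - E[h(E[U | G])] with
   U = Q_k, so the three identities are telescoping sums: by the tower property,
   for G1 ⊆ G2, E[Var_h(U | G1)] = E[Var_h(E[U | G2] | G1)] + E[Var_h(U | G2)].
   The inequalities then reduce to E[Var_h(U | G)] >= 0, i.e. the conditional
   Jensen inequality for h convex on [0,1].  It is obtained by comparing
   E[h(U) | G] with the supporting lines of h at the countably many rational
   points of ]0,1[; the endpoints 0 and 1 are treated separately, because a
   convex function on [0,1] may jump there and need not have a subgradient. *)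

Section convex01.
Context {R : realType}.
Implicit Types (h : R -> R) (x y c eps w z : R).

Lemma convex01_slope_le h p c q : convex01 h ->
  0 <= p -> p < c -> c < q -> q <= 1 ->
  (h c - h p) / (c - p) <= (h q - h c) / (q - c).
Proof.
move=> hconv p0 pc cq q1.
have cp : 0 < c - p by rewrite subr_gt0.
have qc : 0 < q - c by rewrite subr_gt0.
have qp : q - p != 0 by rewrite lt0r_neq0 // subr_gt0 (lt_trans pc cq).
pose t := (q - c) / (q - p).
have t01 : 0 <= t <= 1.
  by rewrite divr_ge0 ?ler_pdivrMr ?mul1r /=; lra.
have tc : t * p + (1 - t) * q = c by rewrite /t; field.
have := hconv p q t; rewrite tc => /(_ _ _ t01) hc.
have {hc} : h c * (q - p) <= (q - c) * h p + (c - p) * h q.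
  have -> : (q - c) * h p + (c - p) * h q = (t * h p + (1 - t) * h q) * (q - p).
    by rewrite /t; field.
  by rewrite ler_wpM2r // ?hc; lra.
rewrite ler_pdivrMr // mulrAC ler_pdivlMr //; nra.
Qed.

Lemma convex01_subgradient h c : convex01 h -> 0 < c < 1 ->
  exists s, forall y, 0 <= y <= 1 -> h c + s * (y - c) <= h y.
Proof.
move=> hconv /andP[c0 c1].
pose E := [set (h c - h p) / (c - p) | p in [set p | 0 <= p < c]].
have E0 : E !=set0 by exists ((h c - h 0) / (c - 0)); exists 0 => //=; rewrite lexx c0.
have Eub y : c < y -> y <= 1 -> ubound E ((h y - h c) / (y - c)).
  by move=> cy y1 _ [p /andP[p0 pc] <-]; exact: convex01_slope_le.
have Ebd : has_ubound E by exists ((h 1 - h c) / (1 - c)); exact: Eub.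
exists (sup E) => y /andP[y0 y1].
have [yc|cy|->] := ltgtP y c; last by rewrite subrr mulr0 addr0.
- have : (h c - h y) / (c - y) <= sup E.
    by apply: ub_le_sup => //; exists y => //=; rewrite y0 yc.
  have cy : 0 < c - y by rewrite subr_gt0.
  rewrite ler_pdivrMr //; nra.
- have : sup E <= (h y - h c) / (y - c) by apply: ge_sup => //; exact: Eub.
  have yc : 0 < y - c by rewrite subr_gt0.
  rewrite ler_pdivlMr //; nra.
Qed.

Definition subgrad01 h c : R :=
  match pselect (exists s, forall y, 0 <= y <= 1 -> h c + s * (y - c) <= h y) with
  | left e => projT1 (cid e)
  | right _ => 0
  end.

Lemma subgrad01P h c : convex01 h -> 0 < c < 1 ->
  forall y, 0 <= y <= 1 -> h c + subgrad01 h c * (y - c) <= h y.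
Proof.
move=> hconv c01; rewrite /subgrad01; case: pselect => [e|ne].
  exact: (projT2 (cid e)).
by exfalso; apply: ne; exact: convex01_subgradient.
Qed.

Lemma subgrad01_ubound h x : convex01 h -> 0 < x < 1 ->
  exists B, forall c, x < c <= (1 + x) / 2 -> subgrad01 h c <= B.
Proof.
move=> hconv x01; have /andP[x0 x1] := x01.
set sx := subgrad01 h x.
exists (2 * (`|h 1 - h x| + `|sx|) / (1 - x)) => c /andP[xc c2].
have c01 : 0 < c < 1 by apply/andP; split; lra.
have hc : h x + sx * (c - x) <= h c.
  by apply: subgrad01P => //; apply/andP; split; lra.
have h1 : h c + subgrad01 h c * (1 - c) <= h 1.
  by apply: subgrad01P => //; rewrite lexx ler01.
have n1 : h 1 - h x <= `|h 1 - h x| := ler_norm _.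
have n2 : - `|sx| <= sx by rewrite lerNl -normrN ler_norm.
have n3 : - `|sx| <= sx * (c - x).
  have := normr_ge0 sx; have /andP[c0 c1] := c01; nra.
have sN : subgrad01 h c * (1 - c) <= `|h 1 - h x| + `|sx| by lra.
rewrite ler_pdivlMr ?subr_gt0 //.
have [s0|s0] := leP (subgrad01 h c) 0.
  by have := normr_ge0 (h 1 - h x); have := normr_ge0 sx; nra.
nra.
Qed.

Lemma convex01_supporting_line_approx h x eps : convex01 h -> 0 < x < 1 -> 0 < eps ->
  exists2 delta, 0 < delta < 1 - x &
    forall c, x < c < x + delta -> h x - eps < h c + subgrad01 h c * (x - c).
Proof.
move=> hconv x01 eps0; have /andP[x0 x1] := x01.
have [B hB] := subgrad01_ubound h x hconv x01.
set sx := subgrad01 h x; pose M := `|B| + `|sx|.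
have M1 : 0 < M + 1 by rewrite ltr_wpDl ?addr_ge0.
pose delta := Num.min (eps / (M + 1)) ((1 - x) / 2).
have de : delta <= eps / (M + 1) by rewrite ge_min lexx.
have dx : delta <= (1 - x) / 2 by rewrite ge_min lexx orbT.
exists delta.
  by rewrite lt_min divr_gt0 //= ?divr_gt0 ?subr_gt0 //; lra.
move=> c /andP[xc cd].
have c01 : 0 < c < 1 by apply/andP; split; lra.
have hc : h x + sx * (c - x) <= h c.
  by apply: subgrad01P => //; apply/andP; split; lra.
have sB : subgrad01 h c <= `|B|.
  by apply: le_trans (hB c _) (ler_norm _); apply/andP; split; lra.
have sxM : - `|sx| <= sx by rewrite lerNl -normrN ler_norm.
have small : (c - x) * (M + 1) < eps by rewrite -ltr_pdivlMr //; lra.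
have gap : - ((c - x) * (M + 1)) <= (c - x) * (sx - subgrad01 h c).
  have : 0 <= sx - subgrad01 h c + (M + 1) by rewrite /M; lra.
  have : 0 < c - x by rewrite subr_gt0.
  nra.
lra.
Qed.

Lemma nat_ratio_between x y : 0 <= x < y ->
  exists n m : nat, x < m%:R / n.+1%:R < y.
Proof.
move=> /andP[x0 xy].
have yx : 0 < y - x by rewrite subr_gt0.
pose n := Num.trunc (y - x)^-1.
have n0 : 0 < n.+1%:R :> R by rewrite ltr0n.
have n_gt : (y - x)^-1 < n.+1%:R := truncnS_gt _.
pose k := Num.trunc (x * n.+1%:R).
have k_le : k%:R <= x * n.+1%:R by rewrite truncn_le mulr_ge0 // ltW.
have k_gt : x * n.+1%:R < k.+1%:R := truncnS_gt _.
exists n, k.+1; rewrite ltr_pdivlMr // ltr_pdivrMr // k_gt /=.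
have : 1 < (y - x) * n.+1%:R by rewrite -ltr_pdivrMl // mulr1.
by rewrite -natr1; lra.
Qed.

Lemma convex01_le_of_supporting_lines h w z : convex01 h -> 0 <= w <= 1 ->
  (forall n m : nat, 0 < (m%:R / n.+1%:R : R) < 1 ->
     h (m%:R / n.+1%:R) + subgrad01 h (m%:R / n.+1%:R) * (w - m%:R / n.+1%:R) <= z) ->
  (w = 0 -> h 0 <= z) -> (w = 1 -> h 1 <= z) -> h w <= z.
Proof.
move=> hconv /andP[w0 w1] lines h0 h1.
have [w_0|wn0] := eqVneq w 0; first by rewrite w_0; apply: h0.
have [w_1|wn1] := eqVneq w 1; first by rewrite w_1; apply: h1.
have w01 : 0 < w < 1 by rewrite !lt_neqAle eq_sym wn0 wn1 w0 w1.
rewrite leNgt; apply/negP => zw.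
have ez : 0 < h w - z by rewrite subr_gt0.
have [delta /andP[d0 d1] approx] := convex01_supporting_line_approx h w _ hconv w01 ez.
have [n [m /andP[wc cd]]] : exists n m : nat, w < (m%:R / n.+1%:R : R) < w + delta.
  by apply: nat_ratio_between; rewrite w0 ltrDl.
have := approx _ (andb_true_intro (conj wc cd)).
have := lines n m; set c := m%:R / n.+1%:R.
have c01 : 0 < c < 1.
  by rewrite (le_lt_trans w0 wc) (lt_trans cd) // -ltrBrDl.
move=> /(_ c01); lra.
Qed.

End convex01.

Section conditional_expectation.
Context {R : realType} {d : measure_display} {T : measurableType d}.
Variable P : probability T R.
Implicit Types (G : set (set T)) (U V W : T -> R).

Definition is_sub_sigma G := sigma_algebra setT G /\ G `<=` measurable.

Definition measurable_in G V :=
  measurable_fun (setT : set (g_sigma_algebraType G)) V.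

Lemma is_sub_sigma_setT {G} : is_sub_sigma G -> G setT.
Proof. by case=> [[G0 GC _] _]; have := GC set0 G0; rewrite setD0. Qed.

Lemma measurable_inP G V : sigma_algebra setT G ->
  (forall B : set R, measurable B -> G (V @^-1` B)) <-> measurable_in G V.
Proof.
move=> sG; split.
- by move=> GV _ B mB; rewrite setTI; apply: sub_sigma_algebra; exact: GV.
- move=> mV B mB; have := mV measurableT B mB; rewrite setTI.
  by rewrite /measurable /= (sigma_algebra_id sG).
Qed.

Lemma CE_is_cond_exp {G U} : cond_exp_exist P -> is_sub_sigma G ->
  P.-integrable setT (EFin \o U) -> is_cond_exp P G U (CE P G U).
Proof.
move=> ex [sG GM] iU; rewrite /CE; case: pselect => [e|ne].
  exact: (projT2 (cid e)).
by exfalso; apply: ne; exact: ex.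
Qed.

Lemma is_cond_exp_integrable {G U W} : is_cond_exp P G U W ->
  P.-integrable setT (EFin \o W).
Proof. by case. Qed.

Lemma is_cond_exp_integral {G U W A} : is_cond_exp P G U W -> G A ->
  (\int[P]_(x in A) (W x)%:E = \int[P]_(x in A) (U x)%:E)%E.
Proof. by case=> _ _; apply. Qed.

Lemma is_cond_exp_measurable_in {G U W} : is_sub_sigma G -> is_cond_exp P G U W ->
  measurable_in G W.
Proof. by move=> [sG _] [mW _ _]; apply/measurable_inP. Qed.

Local Open Scope ereal_scope.

Lemma integralB_EFin_on {A V1 V2} : measurable A ->
  P.-integrable setT (EFin \o V1) -> P.-integrable setT (EFin \o V2) ->
  \int[P]_(x in A) (V1 x - V2 x)%R%:E =
  \int[P]_(x in A) (V1 x)%:E - \int[P]_(x in A) (V2 x)%:E.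
Proof.
move=> mA i1 i2.
rewrite -(integralB_EFin mA (integrableS measurableT mA (subsetT _) i1)
  (integrableS measurableT mA (subsetT _) i2)).
by apply: eq_integral => x _; rewrite EFinB.
Qed.

Lemma integrableB_EFin {V1 V2} :
  P.-integrable setT (EFin \o V1) -> P.-integrable setT (EFin \o V2) ->
  P.-integrable setT (EFin \o (fun x => V1 x - V2 x)%R).
Proof.
move=> i1 i2; apply: (eq_integrable _ ((EFin \o V1) \- (EFin \o V2))) => //.
exact: integrableB.
Qed.

Lemma integrable_eq_indicator {I : eqType} {Y : T -> I} {k : I} :
  measurable (Y @^-1` [set k]) -> P.-integrable setT (EFin \o fun w => (Y w == k)%:R).
Proof.
move=> mYk; apply: (eq_integrable _ (EFin \o \1_(Y @^-1` [set k]))) => //; last first.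
  exact: integrable_indic.
move=> w _; rewrite /= indicE.
suff -> : (w \in Y @^-1` [set k]) = (Y w == k) by [].
by apply/idP/idP => [/set_mem/eqP|/eqP/mem_set].
Qed.

Lemma ae_le_integral_EFin {A V1 V2} : measurable A ->
  P.-integrable setT (EFin \o V1) -> P.-integrable setT (EFin \o V2) ->
  (\forall x \ae P, A x -> (V1 x <= V2 x)%R) ->
  \int[P]_(x in A) (V1 x)%:E <= \int[P]_(x in A) (V2 x)%:E.
Proof.
move=> mA i1 i2 [N [mN PN sub]].
have j1 := integrableS measurableT mA (subsetT _) i1.
have j2 := integrableS measurableT mA (subsetT _) i2.
rewrite (negligible_integral mN mA j1 PN) (negligible_integral mN mA j2 PN).
have mAN : measurable (A `\` N) by exact: measurableD.
have AN : A `\` N `<=` A by move=> x [].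
apply: le_integral => //.
- exact: integrableS mA mAN AN j1.
- exact: integrableS mA mAN AN j2.
move=> x /set_mem [Ax Nx]; rewrite lee_fin.
by apply: contrapT => V12; apply: Nx; apply: sub => /= H; exact: V12 (H Ax).
Qed.

Lemma measure0_of_integral_ge0 A (r : R) V : measurable A -> (0 < r)%R ->
  P.-integrable setT (EFin \o V) -> 0 <= \int[P]_(x in A) (V x)%:E ->
  (forall x, A x -> V x <= - r)%R -> P A = 0.
Proof.
move=> mA r0 iV int0 Vr.
have : \int[P]_(x in A) (V x)%:E <= \int[P]_(x in A) (cst (- r)%R%:E x).
  apply: le_integral => //.
  - exact: integrableS iV.
  - exact: (finite_measure_integrable_cst P).
  - by move=> x /set_mem Ax; rewrite lee_fin Vr.
rewrite integral_cst // => /(le_trans int0).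
rewrite EFinN mulNe oppe_ge0 pmule_rle0 ?lte_fin // => PA.
by apply/eqP; rewrite eq_le PA measure_ge0.
Qed.

Lemma ae_ge0_on {G E V} : is_sub_sigma G -> G E -> measurable_in G V ->
  P.-integrable setT (EFin \o V) ->
  (forall A, G A -> A `<=` E -> 0 <= \int[P]_(x in A) (V x)%:E) ->
  \forall x \ae P, E x -> (0 <= V x)%R.
Proof.
move=> [sG GM] GE mV iV intV.
pose F n := E `&` V @^-1` `]-oo, (- n.+1%:R^-1)%R].
have GF n : G (F n).
  have GV : G (V @^-1` `]-oo, (- n.+1%:R^-1)%R]).
    by apply: (proj2 (measurable_inP G V sG) mV); exact: measurable_itv.
  move: GE GV; rewrite -(measurable_g_measurableTypeE sG).
  exact: measurableI.
have PF n : P (F n) = 0.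
  apply: (measure0_of_integral_ge0 _ n.+1%:R^-1 _ (GM _ (GF n)) _ iV (intV _ (GF n) (@subIsetl _ _ _))).
    by rewrite invr_gt0 ltr0n.
  by move=> x [_]; rewrite /= in_itv.
have : \forall x \ae P, forall n, ~ F n x.
  apply: ae_foralln => n; exists (F n); split; [exact: GM|exact: PF|].
  by move=> x /= /contrapT.
apply: filterS => x Fx Ex; rewrite leNgt; apply/negP => Vx.
apply: (Fx (Num.trunc (- V x)^-1)); split => //; rewrite /= in_itv /=.
rewrite lerNr ltW // -invf_plt ?posrE ?oppr_gt0 ?ltr0n//.
exact: truncnS_gt.
Qed.

Lemma is_cond_exp_le_on {G E U1 U2 W1 W2} : is_sub_sigma G -> G E ->
  P.-integrable setT (EFin \o U1) -> P.-integrable setT (EFin \o U2) ->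
  is_cond_exp P G U1 W1 -> is_cond_exp P G U2 W2 ->
  (\forall x \ae P, E x -> (U1 x <= U2 x)%R) ->
  \forall x \ae P, E x -> (W1 x <= W2 x)%R.
Proof.
move=> gG GE i1 i2 h1 h2 U12.
have j1 := is_cond_exp_integrable h1; have j2 := is_cond_exp_integrable h2.
have mW21 : measurable_in G (fun x => W2 x - W1 x)%R.
  exact: measurable_realfun.measurable_funB
    (is_cond_exp_measurable_in gG h2) (is_cond_exp_measurable_in gG h1).
have W21 : \forall x \ae P, E x -> (0 <= W2 x - W1 x)%R.
  apply: (ae_ge0_on gG GE mW21 (integrableB_EFin j2 j1)) => A GA AE.
  have mA := gG.2 _ GA.
  rewrite integralB_EFin_on // (is_cond_exp_integral h1 GA) (is_cond_exp_integral h2 GA).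
  rewrite subre_ge0; last exact: integrable_fin_num (integrableS _ _ _ i2).
  by apply: ae_le_integral_EFin => //; apply: filterS U12 => x + Ax; apply; exact: AE.
by apply: filterS W21 => x + Ex => /(_ Ex); rewrite subr_ge0.
Qed.

Lemma is_cond_exp_ae_unique {G U W1 W2} : is_sub_sigma G ->
  P.-integrable setT (EFin \o U) ->
  is_cond_exp P G U W1 -> is_cond_exp P G U W2 -> \forall x \ae P, W1 x = W2 x.
Proof.
move=> gG iU h1 h2; have GT := is_sub_sigma_setT gG.
have UU : \forall x \ae P, setT x -> (U x <= U x)%R by apply: aeW => x.
apply: filterS2 (is_cond_exp_le_on gG GT iU iU h1 h2 UU)
  (is_cond_exp_le_on gG GT iU iU h2 h1 UU) => x W12 W21.
by apply/eqP; rewrite eq_le W12 ?W21.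
Qed.

Lemma is_cond_exp_cst {G} (r : R) : is_sub_sigma G ->
  is_cond_exp P G (fun=> r) (fun=> r).
Proof.
move=> [sG _]; split => //; last exact: finite_measure_integrable_cst.
by apply/measurable_inP => //; exact: measurable_cst.
Qed.

Lemma is_cond_exp_01 {G U W} : is_sub_sigma G -> P.-integrable setT (EFin \o U) ->
  (\forall x \ae P, (0 <= U x <= 1)%R) ->
  is_cond_exp P G U W -> \forall x \ae P, (0 <= W x <= 1)%R.
Proof.
move=> gG iU U01 hW; have GT := is_sub_sigma_setT gG.
have i0 : P.-integrable setT (EFin \o fun=> 0%R) by exact: finite_measure_integrable_cst.
have i1 : P.-integrable setT (EFin \o fun=> 1%R) by exact: finite_measure_integrable_cst.
have W0 : \forall x \ae P, setT x -> (0 <= W x)%R.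
  apply: (is_cond_exp_le_on gG GT i0 iU (is_cond_exp_cst 0 gG) hW).
  by apply: filterS U01 => x /andP[].
have W1 : \forall x \ae P, setT x -> (W x <= 1)%R.
  apply: (is_cond_exp_le_on gG GT iU i1 hW (is_cond_exp_cst 1 gG)).
  by apply: filterS U01 => x /andP[].
by apply: filterS2 W0 W1 => x W0x W1x; rewrite W0x ?W1x.
Qed.

Lemma integrable_affine {V} (a b : R) : P.-integrable setT (EFin \o V) ->
  P.-integrable setT (EFin \o (fun x => a + b * V x)%R).
Proof.
move=> iV.
apply: (eq_integrable measurableT ((EFin \o cst a) \+ (fun x => b%:E * (V x)%:E))).
  by move=> x _ /=.
apply: integrableD => //; first exact: finite_measure_integrable_cst.
exact: integrableZl.
Qed.

Lemma integral_affine A (a b : R) V : measurable A ->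
  P.-integrable setT (EFin \o V) ->
  \int[P]_(x in A) (a + b * V x)%R%:E = a%:E * P A + b%:E * \int[P]_(x in A) (V x)%:E.
Proof.
move=> mA iV; have iVA := integrableS measurableT mA (subsetT _) iV.
have ibV : P.-integrable A (EFin \o (fun x => b * V x)%R).
  by apply: (eq_integrable mA (fun x => b%:E * (V x)%:E)) => //; exact: integrableZl.
transitivity (\int[P]_(x in A) ((cst a x)%:E + (b * V x)%:E)).
  by apply: eq_integral => x _; rewrite EFinD.
rewrite integralD_EFin //; last exact: finite_measure_integrable_cst.
by rewrite -integralZl // -[a%:E * _]integral_cst.
Qed.

Lemma is_cond_exp_affine {G U W} (a b : R) : is_sub_sigma G ->
  P.-integrable setT (EFin \o U) -> is_cond_exp P G U W ->
  is_cond_exp P G (fun x => a + b * U x)%R (fun x => a + b * W x)%R.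
Proof.
move=> gG iU hW; have iW := is_cond_exp_integrable hW; split.
- apply/(measurable_inP _ _ gG.1); apply: measurable_realfun.measurable_funD.
    exact: measurable_cst.
  apply: measurable_realfun.measurable_funM; first exact: measurable_cst.
  exact: is_cond_exp_measurable_in gG hW.
- exact: integrable_affine.
- move=> A GA; have mA := gG.2 _ GA.
  by rewrite !integral_affine // (is_cond_exp_integral hW GA).
Qed.

Lemma is_cond_exp_eq0_on {G U W} : is_sub_sigma G ->
  P.-integrable setT (EFin \o U) -> (\forall x \ae P, (0 <= U x)%R) ->
  is_cond_exp P G U W -> \forall x \ae P, W x = 0%R -> U x = 0%R.
Proof.
move=> gG iU U0 hW.
pose E := W @^-1` [set 0%R].
have GE : G E.
  by apply: (proj2 (measurable_inP G W gG.1) (is_cond_exp_measurable_in gG hW)).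
have mE := gG.2 _ GE.
have mU := measurable_funS measurableT (subsetT E) (measurable_int _ iU).
have intU0 : \int[P]_(x in E) `|(EFin \o U) x| = 0.
  transitivity (\int[P]_(x in E) (U x)%:E).
    apply: ae_eq_integral => //.
    - exact: measurable_funS (measurable_int _ (integrable_abse iU)).
    - by apply: filterS U0 => x U0x _ /=; rewrite ger0_norm.
  rewrite -(is_cond_exp_integral hW GE); apply: integral0_eq => x /= ->; by [].
have := (ae_eq_integral_abs _ mE mU).1 intU0.
by apply: filterS => x U0x Ex; exact: (congr1 fine (U0x Ex)).
Qed.

Lemma CE_tower {G1 G2 U W} : cond_exp_exist P -> is_sub_sigma G1 -> G1 `<=` G2 ->
  P.-integrable setT (EFin \o U) -> is_cond_exp P G2 U W ->
  \forall x \ae P, CE P G1 W x = CE P G1 U x.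
Proof.
move=> ex g1 G12 iU hW; apply: (is_cond_exp_ae_unique g1 iU); last exact: CE_is_cond_exp.
have [mC iC intC] := CE_is_cond_exp ex g1 (is_cond_exp_integrable hW).
split => // A GA; rewrite intC //; exact: is_cond_exp_integral hW (G12 _ GA).
Qed.

Lemma is_cond_exp_eq1_on {G U W} : is_sub_sigma G ->
  P.-integrable setT (EFin \o U) -> (\forall x \ae P, (U x <= 1)%R) ->
  is_cond_exp P G U W -> \forall x \ae P, W x = 1%R -> U x = 1%R.
Proof.
move=> gG iU U1 hW.
have U1' : \forall x \ae P, (0 <= 1 + -1 * U x)%R.
  by apply: filterS U1 => x; rewrite mulN1r subr_ge0.
apply: filterS (is_cond_exp_eq0_on gG (integrable_affine 1 (-1) iU) U1'
  (is_cond_exp_affine 1 (-1) gG iU hW)) => x + Wx.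
by rewrite Wx; lra.
Qed.

Lemma is_cond_exp_minorant {G h U W Z} (a b : R) : is_sub_sigma G ->
  P.-integrable setT (EFin \o U) -> (\forall x \ae P, (0 <= U x <= 1)%R) ->
  hint P h U -> is_cond_exp P G U W -> is_cond_exp P G (h \o U) Z ->
  (forall y, 0 <= y <= 1 -> a + b * y <= h y)%R ->
  \forall x \ae P, (a + b * W x <= Z x)%R.
Proof.
move=> gG iU U01 hU hW hZ abh.
have UhU : \forall x \ae P, setT x -> (a + b * U x <= h (U x))%R.
  by apply: filterS U01 => x Ux _; exact: abh.
have := is_cond_exp_le_on gG (is_sub_sigma_setT gG) (integrable_affine a b iU) hU
  (is_cond_exp_affine a b gG iU hW) hZ UhU.
by apply: filterS => x; apply.
Qed.

Lemma is_cond_exp_level_le {G h U W Z} (w0 : R) : is_sub_sigma G ->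
  hint P h U -> is_cond_exp P G U W -> is_cond_exp P G (h \o U) Z ->
  (\forall x \ae P, W x = w0 -> U x = w0) ->
  \forall x \ae P, W x = w0 -> (h w0 <= Z x)%R.
Proof.
move=> gG hU hW hZ WU; have GE : G (W @^-1` [set w0]).
  by apply: (proj2 (measurable_inP G W gG.1) (is_cond_exp_measurable_in gG hW)).
have hUw0 : \forall x \ae P, W x = w0 -> (h w0 <= h (U x))%R.
  by apply: filterS WU => x WUx Ex; rewrite (WUx Ex).
have ihw0 : P.-integrable setT (EFin \o fun=> h w0).
  exact: finite_measure_integrable_cst.
exact: is_cond_exp_le_on gG GE ihw0 hU (is_cond_exp_cst (h w0) gG) hZ hUw0.
Qed.

Lemma is_cond_exp_jensen01_ae {G h U W Z} : is_sub_sigma G -> convex01 h ->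
  P.-integrable setT (EFin \o U) -> (\forall x \ae P, (0 <= U x <= 1)%R) ->
  hint P h U -> is_cond_exp P G U W -> is_cond_exp P G (h \o U) Z ->
  \forall x \ae P, (h (W x) <= Z x)%R.
Proof.
move=> gG hconv iU U01 hU hW hZ.
have lines : \forall x \ae P, forall n m : nat, (0 < (m%:R / n.+1%:R : R) < 1)%R ->
    (h (m%:R / n.+1%:R) + subgrad01 h (m%:R / n.+1%:R) * (W x - m%:R / n.+1%:R)
      <= Z x)%R.
  apply: ae_foralln => n; apply: ae_foralln => m.
  set c : R := (m%:R / n.+1%:R)%R.
  have [c01|_] := boolP (0 < c < 1)%R; last by apply: aeW.
  have sc y : (0 <= y <= 1 -> h c - subgrad01 h c * c + subgrad01 h c * y <= h y)%R.
    by move=> /(subgrad01P h c hconv c01); lra.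
  have := is_cond_exp_minorant _ _ gG iU U01 hU hW hZ sc.
  by apply: filterS => x hx _; lra.
have U0 : \forall x \ae P, (0 <= U x)%R by apply: filterS U01 => x /andP[].
have U1 : \forall x \ae P, (U x <= 1)%R by apply: filterS U01 => x /andP[].
near=> x; apply: (convex01_le_of_supporting_lines h (W x) (Z x) hconv).
- by near: x; apply: is_cond_exp_01 gG iU U01 hW.
- by near: x; exact: lines.
- by near: x; exact: is_cond_exp_level_le gG hU hW hZ (is_cond_exp_eq0_on gG iU U0 hW).
- by near: x; exact: is_cond_exp_level_le gG hU hW hZ (is_cond_exp_eq1_on gG iU U1 hW).
Unshelve. all: by end_near.
Qed.

Lemma is_cond_exp_jensen01 {G h U W} : cond_exp_exist P -> is_sub_sigma G ->
  convex01 h -> P.-integrable setT (EFin \o U) ->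
  (\forall x \ae P, (0 <= U x <= 1)%R) -> is_cond_exp P G U W ->
  hint P h U -> hint P h W -> 'E_P[h \o W] <= 'E_P[h \o U].
Proof.
move=> ex gG hconv iU U01 hW hU hhW.
have hZ := CE_is_cond_exp ex gG hU.
have hWZ := is_cond_exp_jensen01_ae gG hconv iU U01 hU hW hZ.
rewrite unlock -(is_cond_exp_integral hZ (is_sub_sigma_setT gG)).
apply: ae_le_integral_EFin => //; first exact: is_cond_exp_integrable hZ.
by apply: filterS hWZ => x + _.
Qed.

Lemma EcvarE {G h U} : cond_exp_exist P -> is_sub_sigma G ->
  hint P h U -> hint P h (CE P G U) ->
  Ecvar P h G U = 'E_P[h \o U] - 'E_P[h \o CE P G U].
Proof.
move=> ex gG hU hC; have hZ := CE_is_cond_exp ex gG hU.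
rewrite /Ecvar /cvar unlock integralB_EFin_on //; last exact: is_cond_exp_integrable hZ.
by rewrite (is_cond_exp_integral hZ (is_sub_sigma_setT gG)).
Qed.

Lemma Ecvar_fin_num {G h U} : cond_exp_exist P -> is_sub_sigma G ->
  hint P h U -> hint P h (CE P G U) -> Ecvar P h G U \is a fin_num.
Proof.
move=> ex gG hU hC; rewrite EcvarE // unlock.
by rewrite fin_numB !integrable_fin_num.
Qed.

Lemma Ecvar_ge0 {G h U} : cond_exp_exist P -> is_sub_sigma G -> convex01 h ->
  P.-integrable setT (EFin \o U) -> (\forall x \ae P, (0 <= U x <= 1)%R) ->
  hint P h U -> hint P h (CE P G U) -> 0 <= Ecvar P h G U.
Proof.
move=> ex gG hconv iU U01 hU hC; rewrite EcvarE // subre_ge0.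
  exact: is_cond_exp_jensen01 ex gG hconv iU U01 (CE_is_cond_exp ex gG iU) hU hC.
by rewrite unlock integrable_fin_num.
Qed.

Lemma Ecvar_tower {G1 G2 h U} : cond_exp_exist P ->
  is_sub_sigma G1 -> is_sub_sigma G2 -> G1 `<=` G2 ->
  P.-integrable setT (EFin \o U) -> hint P h U -> hint P h (CE P G2 U) ->
  hint P h (CE P G1 (CE P G2 U)) -> hint P h (CE P G1 U) ->
  Ecvar P h G1 U = Ecvar P h G1 (CE P G2 U) + Ecvar P h G2 U.
Proof.
move=> ex g1 g2 G12 iU hU h2 h12 h1.
have tower := CE_tower ex g1 G12 iU (CE_is_cond_exp ex g2 iU).
have E12 : 'E_P[h \o CE P G1 (CE P G2 U)] = 'E_P[h \o CE P G1 U].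
  rewrite unlock; apply: ae_eq_integral => //.
  - exact: measurable_int h12.
  - exact: measurable_int h1.
  - by apply: filterS tower => x /= ->.
rewrite !EcvarE // E12 [RHS]addeC [RHS]addeA subeK // unlock.
exact: integrable_fin_num.
Qed.

(* In the theorem, GS, GB, GSR and GBR are sigma(S_k), sigma(S_Bk),
   sigma(S_k, R_k) and sigma(S_Bk, R_k), and U is Q_k. *)
Lemma Ecvar_decomposition {GS GB GSR GBR h U} : cond_exp_exist P ->
  is_sub_sigma GS -> is_sub_sigma GB -> is_sub_sigma GSR -> is_sub_sigma GBR ->
  GB `<=` GS -> GS `<=` GSR -> GB `<=` GBR ->
  P.-integrable setT (EFin \o U) -> (\forall x \ae P, (0 <= U x <= 1)%R) ->
  hint P h U /\ hint P h (CE P GS U) /\ hint P h (CE P GSR U) /\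
  hint P h (CE P GS (CE P GSR U)) /\ hint P h (CE P GB U) /\
  hint P h (CE P GB (CE P GS U)) /\ hint P h (CE P GBR U) /\
  hint P h (CE P GB (CE P GBR U)) ->
  [/\ Ecvar P h GS U = Ecvar P h GS (CE P GSR U) + Ecvar P h GSR U,
      Ecvar P h GB U = Ecvar P h GS U + Ecvar P h GB (CE P GS U),
      Ecvar P h GB U = Ecvar P h GB (CE P GBR U) + Ecvar P h GBR U,
      Ecvar P h GB (CE P GS U) \is a fin_num
    & convex01 h ->
      [/\ 0 <= Ecvar P h GS (CE P GSR U), 0 <= Ecvar P h GSR U,
          0 <= Ecvar P h GB (CE P GS U) & 0 <= Ecvar P h GBR U]].
Proof.
move=> ex gS gB gSR gBR BS SSR BBR iU U01 [hU [hS [hSR [hSSR [hB [hBS [hBR hBBR]]]]]]].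
have vS := CE_is_cond_exp ex gS iU; have vSR := CE_is_cond_exp ex gSR iU.
split.
- exact: Ecvar_tower.
- by rewrite addeC; exact: Ecvar_tower.
- exact: Ecvar_tower.
- exact: Ecvar_fin_num.
move=> hconv; split; apply: Ecvar_ge0 => //.
- exact: is_cond_exp_integrable vSR.
- exact: is_cond_exp_01 gSR iU U01 vSR.
- exact: is_cond_exp_integrable vS.
- exact: is_cond_exp_01 gS iU U01 vS.
Qed.

End conditional_expectation.

Section sigma_of.
Context {d} {T : measurableType d}.

Lemma sigma_of_sub_sigma {d'} {T' : measurableType d'} {V : T -> T'} :
  measurable_fun setT V -> is_sub_sigma (sigma_of V).
Proof.
move=> mV; split; first exact/sigma_algebra_preimage/sigma_algebra_measurable.
by move=> _ [B mB <-]; exact: mV.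
Qed.

Lemma sigma_of_comp {d' d''} {T' : measurableType d'} {T'' : measurableType d''}
    (V : T -> T') (g : T' -> T'') :
  measurable_fun setT g -> sigma_of (g \o V) `<=` sigma_of V.
Proof. exact: preimage_set_system_compS. Qed.

Lemma sigma_of_fst {d' d''} {T' : measurableType d'} {T'' : measurableType d''}
    (V : T -> T') (V' : T -> T'') :
  sigma_of V `<=` sigma_of (fun w => (V w, V' w)).
Proof. exact: (sigma_of_comp (fun w => (V w, V' w)) fst measurable_fst). Qed.

End sigma_of.

Section binning.
Context {R : realType} {d} {T : measurableType d} (P : probability T R).

Definition bin_mean (bin : R -> nat) (V : T -> R) (n : nat) : R :=
  let A := V @^-1` (bin @^-1` [set n]) in
  fine (\int[P]_(x in A) (V x)%:E) / fine (P A).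

Lemma binnedE (bin : R -> nat) (V : T -> R) :
  binned P bin V = bin_mean bin V \o bin \o V.
Proof. by []. Qed.

Lemma measurable_binned {bin : R -> nat} {V : T -> R} :
  measurable_fun setT bin -> measurable_fun setT V ->
  measurable_fun setT (binned P bin V).
Proof.
move=> mbin mV; rewrite binnedE.
by apply: measurableT_comp mV; exact: measurableT_comp mbin.
Qed.

Lemma sigma_of_binned {bin : R -> nat} {V : T -> R} : measurable_fun setT bin ->
  sigma_of (binned P bin V) `<=` sigma_of V.
Proof.
move=> mbin; rewrite binnedE.
by apply: sigma_of_comp; exact: measurableT_comp mbin.
Qed.

End binning.

Section sum_decomposition.
Context {R : realType} {K : nat}.
Local Open Scope ereal_scope.

Lemma sum_decomposition (gS gB eS rS eB rB ind : 'I_K -> \bar R) (cond : 'I_K -> Prop) :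
  (forall k, [/\ gS k = eS k + rS k, gB k = gS k + ind k, gB k = eB k + rB k,
    ind k \is a fin_num & cond k -> [/\ 0 <= eS k, 0 <= rS k, 0 <= ind k & 0 <= rB k]]) ->
  [/\ \sum_(k < K) gS k = \sum_(k < K) eS k + \sum_(k < K) rS k,
      \sum_(k < K) gB k = \sum_(k < K) gS k + \sum_(k < K) ind k,
      \sum_(k < K) gS k = \sum_(k < K) eB k - \sum_(k < K) ind k + \sum_(k < K) rB k
    & (forall k, cond k) ->
      [/\ \sum_(k < K) eS k <= \sum_(k < K) gS k, 0 <= \sum_(k < K) eS k,
          0 <= \sum_(k < K) ind k
        & \sum_(k < K) eB k - \sum_(k < K) ind k <= \sum_(k < K) gS k]].
Proof.
move=> dec.
have sum_gS_S : \sum_(k < K) gS k = \sum_(k < K) eS k + \sum_(k < K) rS k.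
  by rewrite -big_split; apply: eq_bigr => k _; have [] := dec k.
have sum_gS_B : \sum_(k < K) gS k = \sum_(k < K) eB k - \sum_(k < K) ind k + \sum_(k < K) rB k.
  rewrite -sumeN; last by move=> i j _ _; apply: fin_num_adde_defl; have [] := dec j.
  rewrite -!big_split; apply: eq_bigr => k _ /=; have [_ gSi gBr ind_fin _] := dec k.
  by rewrite -[gS k](addeK _ ind_fin) -gSi gBr addeAC.
split => //; first by rewrite -big_split; apply: eq_bigr => k _; have [] := dec k.
move=> hcond.
have ge0 k : [/\ 0 <= eS k, 0 <= rS k, 0 <= ind k & 0 <= rB k].
  by have [_ _ _ _] := dec k; apply.
split.
- by rewrite sum_gS_S leeDl // sume_ge0 // => k _; have [] := ge0 k.
- by rewrite sume_ge0 // => k _; have [] := ge0 k.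
- by rewrite sume_ge0 // => k _; have [] := ge0 k.
- by rewrite sum_gS_B leeDl // sume_ge0 // => k _; have [] := ge0 k.
Qed.

End sum_decomposition.

Theorem theorem3 (R : realType) (d : measure_display) (T : measurableType d)
  (P : probability T R)
  (dX : measure_display) (Xsp : measurableType dX) (X : T -> Xsp)
  (K : nat) (Y : T -> 'I_K)
  (f : 'I_K -> Xsp -> R) (phi : ('I_K -> R) -> 'I_K -> R)
  (h : 'I_K -> R -> R) (Rpart : 'I_K -> Xsp -> nat) (bin : 'I_K -> R -> nat) :
  measurable_fun setT X ->
  (forall k, measurable (Y @^-1` [set k])) ->
  (forall k, measurable_fun setT (f k)) ->
  (forall x, (forall k, 0 <= f k x) /\ \sum_(k < K) f k x = 1) ->
  (forall k, measurable_fun setT (Rpart k)) ->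
  (forall k, measurable_fun setT (bin k)) ->
  cond_exp_exist P ->
  let S k := f k \o X in
  let Q k := CE P (sigma_of X) (fun w => (Y w == k)%:R) in
  let C k := CE P (sigma_of (S k)) (Q k) in
  let SB k := binned P (bin k) (S k) in
  let sigSR k := sigma_of (fun w => (S k w, Rpart k (X w))) in
  let sigSBR k := sigma_of (fun w => (SB k w, Rpart k (X w))) in
  let DS k := CE P (sigSR k) (Q k) in
  let DB k := CE P (sigSBR k) (Q k) in
  let dphi w := \sum_(k < K) phi (fun j => C j w) k * Q k w
              - \sum_(k < K) phi (fun j => Q j w) k * Q k w in
  let GL_S := ('E_P[dphi])%E in
  P.-integrable setT (EFin \o dphi) ->
  (forall k, hint P (h k) (Q k) /\ hint P (h k) (C k) /\
             hint P (h k) (DS k) /\ hint P (h k) (CE P (sigma_of (S k)) (DS k)) /\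
             hint P (h k) (CE P (sigma_of (SB k)) (Q k)) /\
             hint P (h k) (CE P (sigma_of (SB k)) (C k)) /\
             hint P (h k) (DB k) /\ hint P (h k) (CE P (sigma_of (SB k)) (DB k))) ->
  GL_S = (\sum_(k < K) Ecvar P (h k) (sigma_of (S k)) (Q k))%E ->
  let GL_SB := (\sum_(k < K) Ecvar P (h k) (sigma_of (SB k)) (Q k))%E in
  let expl_S := (\sum_(k < K) Ecvar P (h k) (sigma_of (S k)) (DS k))%E in
  let res_S := (\sum_(k < K) Ecvar P (h k) (sigSR k) (Q k))%E in
  let expl_SB := (\sum_(k < K) Ecvar P (h k) (sigma_of (SB k)) (DB k))%E in
  let res_SB := (\sum_(k < K) Ecvar P (h k) (sigSBR k) (Q k))%E in
  let induced := (\sum_(k < K) Ecvar P (h k) (sigma_of (SB k)) (C k))%E in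
  [/\ GL_S = (expl_S + res_S)%E,
      GL_SB = (GL_S + induced)%E,
      GL_S = (expl_SB - induced + res_SB)%E
    & (forall k, convex01 (h k)) ->
      [/\ (expl_S <= GL_S)%E, (0 <= expl_S)%E, (0 <= induced)%E
        & (expl_SB - induced <= GL_S)%E]].
Proof.
(* GL(S) only enters through the assumed identity for it. *)
move=> mX mY mf _ mR mbin ex S Q C SB sigSR sigSBR DS DB dphi GL_S _ hints HGL
  GL_SB expl_S res_S expl_SB res_SB induced.
have mS k : measurable_fun setT (S k) := measurableT_comp (mf k) mX.
have mSB k : measurable_fun setT (SB k) := measurable_binned P (mbin k) (mS k).
have mRX k : measurable_fun setT (Rpart k \o X) := measurableT_comp (mR k) mX.
have vQ k := CE_is_cond_exp P ex (sigma_of_sub_sigma mX) (integrable_eq_indicator P (mY k)).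
have Q01 k : \forall x \ae P, (0 <= Q k x <= 1)%R.
  apply: (is_cond_exp_01 P) (sigma_of_sub_sigma mX) _ _ (vQ k).
    exact: integrable_eq_indicator.
  by apply: aeW => w; case: (_ == _); rewrite ?lexx ?ler01.
rewrite HGL; apply: sum_decomposition => k.
rewrite /DS /DB /C /sigSR /sigSBR; apply: (Ecvar_decomposition P) (hints k) => //.
- exact: sigma_of_sub_sigma.
- exact: sigma_of_sub_sigma.
- exact: sigma_of_sub_sigma (measurable_fun_pair (mS k) (mRX k)).
- exact: sigma_of_sub_sigma (measurable_fun_pair (mSB k) (mRX k)).
- exact: sigma_of_binned.
- exact: sigma_of_fst.
- exact: sigma_of_fst.
- exact: (is_cond_exp_integrable P (vQ k)).
Qed.
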